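(* Let $T = T_d(I)$ be a non-empty, balanced triangular region. Then two tilings of $T$ have the same lattice path sign if and only if the sum of the $E$-counts (which may count some end points $E_j$ multiple times) of the difference cycles is even.
   Context: Let $R=K[x,y,z]$ and $I\subset R$ a monomial ideal. $T_d(I)$ is obtained from the triangle $\mathcal{T}_d$ of side length $d$, subdivided into unit triangles labeled by monomials (downward ones by degree $d-2$, upward ones by degree $d-1$), by removing the triangles whose labels lie in $I$; it is balanced if it has equally many upward- and downward-pointing unit triangles. Lozenges are pairs of unit triangles sharing an edge; tilings cover each triangle exactly once. $L(T)$ is the set of midpoints of edges of triangles of $T$ parallel to the upper-left boundary of $\mathcal{T}_d$ (paths step East or Southeast). $A_1,\dots,A_m$ are the vertices of $L(T)$ lying only on upward-pointing triangles of $T$, $E_1,\dots,E_m$ those lying only on downward-pointing triangles, each ordered by graded reverse-lex order of monomial labels. A tiling $\tau$ determines a family of non-intersecting lattice paths (joining the vertices of $L(T)$ on each lozenge); if the path starting at $A_i$ ends at $E_{\lambda(i)}$, the lattice path sign of $\tau$ is $\operatorname{sgn}(\lambda)$. An $n$-cycle of lozenges in a tiling is an ordered collection of distinct lozenges $\ell_1,\dots,\ell_n$ such that the downward triangle of $\ell_i$ is adjacent to the upward triangle of $\ell_{i+1}$ (indices mod $n$). Its $E$-count is the number of lattice path end points $E_j$ inside the cycle. If $\tau_1,\tau_2$ are tilings with perfect matching permutations $\pi_1,\pi_2$ (bijections from downward to upward triangles given by the lozenges) and $\pi_2=\rho\pi_1$, write $\rho$ as a product of disjoint cycles of length at least two;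 each corresponds to a cycle of lozenges of $\tau_1$, and twisting all of them (re-pairing the downward triangle of $\ell_i$ with the upward triangle of $\ell_{i+1}$) yields $\tau_2$. These lozenge cycles are the difference cycles of $\tau_1$ and $\tau_2$. *)

From mathcomp Require Import all_boot all_fingroup.
Set Implicit Arguments. Unset Strict Implicit. Unset Printing Implicit Defensive.

(* Monomials x^a y^b z^c of K[x,y,z] are represented by exponent triples.  *)
Definition mon := (nat * nat * nat)%type.
Definition ex (m : mon) : nat := m.1.1.
Definition ey (m : mon) : nat := m.1.2.
Definition ez (m : mon) : nat := m.2.
Definition deg (m : mon) : nat := ex m + ey m + ez m.
Definition mulx (m : mon) : mon := (ex m + 1, ey m, ez m).
Definition muly (m : mon) : mon := (ex m, ey m + 1, ez m).
Definition mulz (m : mon) : mon := (ex m, ey m, ez m + 1).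
Definition divz (m : mon) : mon := (ex m, ey m, ez m - 1).

Definition monos (n : nat) : seq mon :=
  [seq (a, b, n - a - b) | a <- iota 0 n.+1, b <- iota 0 (n - a).+1].

(* A monomial ideal of K[x,y,z] is determined by (and given here as) the set
   of monomials it contains; such a set is exactly a set of monomials closed
   under multiplication by the variables. *)
Definition monomial_ideal (I : pred mon) : Prop :=
  forall m, I m -> [&& I (mulx m), I (muly m) & I (mulz m)].

(* Convention for T_d: the top corner is x^(d-1),
   bottom-left y^(d-1), bottom-right z^(d-1).  Upward triangles carry the
   monomials of degree d-1, downward ones those of degree d-2.  A downward
   triangle m is adjacent to exactly the upward triangles x m (above it,
   sharing a horizontal edge), y m (to its left) and z m (to its right; the
   shared edge is parallel to the upper-left boundary). *)
Definition inUp (d : nat) (I : pred mon) (u : mon) : bool :=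
  (deg u + 1 == d) && ~~ I u.
Definition inDown (d : nat) (I : pred mon) (m : mon) : bool :=
  (deg m + 2 == d) && ~~ I m.

Definition upsT (d : nat) (I : pred mon) : seq mon :=
  [seq u <- monos d.-1 | inUp d I u].
Definition downsT (d : nat) (I : pred mon) : seq mon :=
  [seq m <- monos d.-2 | inDown d I m].

Definition nonempty_region (d : nat) (I : pred mon) : Prop :=
  0 < size (upsT d I) + size (downsT d I).
Definition balanced (d : nat) (I : pred mon) : Prop :=
  size (upsT d I) = size (downsT d I).

(* A tiling
   of T is encoded by its perfect matching pi : downward -> upward triangles
   (lozenges (m, pi m)); every triangle of T lies in exactly one lozenge. *)
Definition lozenge (d : nat) (I : pred mon) (m u : mon) : bool :=
  [&& inDown d I m, inUp d I u & (u \in [:: mulx m; muly m; mulz m])].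

Definition tiling (d : nat) (I : pred mon) (pi : mon -> mon) : Prop :=
  (forall m, inDown d I m -> lozenge d I m (pi m)) /\
  (forall u, inUp d I u -> count (fun m => pi m == u) (downsT d I) = 1).

Definition pinv (d : nat) (I : pred mon) (pi : mon -> mon) (u : mon) : mon :=
  nth u (downsT d I) (find (fun m => pi m == u) (downsT d I)).

(* Every edge parallel to the upper-left boundary is the left edge
   of a unique upward triangle u of T_d; we denote that edge (and its
   midpoint) by u.  Its two neighbouring triangles are u and (if ez u > 0)
   the downward triangle u / z. *)
Definition start_pt (d : nat) (I : pred mon) (u : mon) : bool :=
  inUp d I u && ((ez u == 0) || ~~ inDown d I (divz u)).
Definition end_pt (d : nat) (I : pred mon) (u : mon) : bool :=
  [&& deg u + 1 == d, ~~ inUp d I u, 0 < ez u & inDown d I (divz u)].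

(* graded reverse-lexicographic order (x > y > z) on monomials of one degree *)
Definition grevlex_ge (m n : mon) : bool :=
  (ez m < ez n) || ((ez m == ez n) && (ey m <= ey n)).

Definition As (d : nat) (I : pred mon) : seq mon :=
  sort grevlex_ge [seq u <- monos d.-1 | start_pt d I u].
Definition Es (d : nat) (I : pred mon) : seq mon :=
  sort grevlex_ge [seq u <- monos d.-1 | end_pt d I u].

(* Following a lattice path: on the lozenge containing the upward triangle u
   (whose left edge is the current point), the path moves to the right edge
   of the downward triangle m = pinv u, i.e. to the point  z m. *)
Fixpoint path_end (d : nat) (I : pred mon) (pi : mon -> mon) (fuel : nat)
    (u : mon) : mon :=
  if fuel is f.+1 then
    if inUp d I u then path_end d I pi f (mulz (pinv d I pi u)) else u
  else u.

Definition lp_odd (d : nat) (I : pred mon) (pi : mon -> mon) : bool :=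
  let A := As d I in let E := Es d I in
  match [pick s : {perm 'I_(size A)} |
          [forall i, val (s i) == index (path_end d I pi d (nth (0,0,0) A i)) E]]
  with Some s => odd_perm s | None => false end.

(* The closed curve it determines passes through the
   centres of up_1, down_1, up_2, down_2, ..., down_n (and back to up_1),
   crossing the edge shared by down_i and up_i and the edge shared by down_i
   and up_(i+1). *)
Definition loz_cycle (d : nat) (I : pred mon) (L : seq (mon * mon)) : Prop :=
  [/\ 2 <= size L, uniq L, all (fun l => lozenge d I l.1 l.2) L &
      all (fun p => lozenge d I p.1.1 p.2.2) (zip L (rot 1 L))].

Definition curve_links (L : seq (mon * mon)) : seq (mon * mon) :=
  L ++ [seq (p.1.1, p.2.2) | p <- zip L (rot 1 L)].

(* "Inside" by the even-odd (ray casting) rule, with the ray from the end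
   point e going East along the horizontal mid-line of its row.  That ray
   meets no lattice vertex and no triangle centre; it crosses a link
   (m, u) of the curve exactly when the edge shared by m and u is a
   non-horizontal edge (u = y m or u = z m) of the same row (ex m = ex e)
   lying strictly to the right of e (ez m >= ez e). *)
Definition ray_crosses (e : mon) (l : mon * mon) : bool :=
  [&& ex l.1 == ex e, ez e <= ez l.1 & (l.2 == muly l.1) || (l.2 == mulz l.1)].

Definition inside (e : mon) (L : seq (mon * mon)) : bool :=
  odd (count (ray_crosses e) (curve_links L)).

Definition Ecount (d : nat) (I : pred mon) (L : seq (mon * mon)) : nat :=
  count (fun e => inside e L) (Es d I).

(* Difference cycles of tau_1 (matching pi1) and tau_2 (matching pi2):
   a cycle is given by the list [m_1; ...; m_n] of the downward triangles
   of its lozenges l_i = (m_i, pi1 m_i), with pi2 m_i = pi1 m_(i+1), i.e.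
   (pi1 m_1 ... pi1 m_n) is a cycle of rho = pi2 pi1^-1 of length >= 2.
   [diff_cycles] says that Cs lists all of them, each exactly once. *)
Definition loz_of (pi1 : mon -> mon) (C : seq mon) : seq (mon * mon) :=
  [seq (m, pi1 m) | m <- C].

Definition diff_cycles (d : nat) (I : pred mon) (pi1 pi2 : mon -> mon)
    (Cs : seq (seq mon)) : Prop :=
  (forall C, C \in Cs ->
     [/\ 2 <= size C, uniq C, all (inDown d I) C &
         all (fun p => pi2 p.1 == pi1 p.2) (zip C (rot 1 C))]) /\
  (forall m, inDown d I m -> count_mem m (flatten Cs) = (pi1 m != pi2 m) :> nat).

From mathcomp Require Import all_boot all_fingroup.
From mathcomp Require Import zify.
Set Implicit Arguments. Unset Strict Implicit. Unset Printing Implicit Defensive.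

(* Following a tiling, the lattice path from a start point moves one column
   (z-degree) to the right per lozenge, staying in its row or descending by
   one, and paths never cross.  Hence two paths are inverted by lambda
   exactly when the longer one passes above the end point of the shorter
   one, so the number of inversions is the number of pairs (q, u) of an end
   point q and a path point u above q in its column.  Redistributing
   these pairs over the lozenges, each lozenge (m, u) contributes, up to
   parity and up to a term depending only on m, the number of end points
   whose ray to the East crosses the edge shared by m and u.  Thus
   sgn lambda(tau) = (-1)^(N(tau) + c), where N(tau) counts the pairs of an
   end point and a lozenge of tau crossed by its ray and c does not depend
   on tau.  The curve of a difference cycle runs alternately through
   lozenges of tau_1 and tau_2, so by the even-odd rule the total E-count
   of the difference cycles is N(tau_1) + N(tau_2) modulo 2. *)

Definition inversions n (s : 'S_n) : nat :=
  \sum_(i < n) \sum_(j < n) ((i < j) && (s j < s i)).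

Lemma lift_perm0P n (s : 'S_n.+1) : exists s' : 'S_n, s = lift_perm ord0 (s ord0) s'.
Proof.
pose f (k : 'I_n) := odflt k (unlift (s ord0) (s (lift ord0 k))).
have liftf k : lift (s ord0) (f k) = s (lift ord0 k).
  rewrite /f; case: unliftP => [j -> // | /perm_inj/eqP].
  by rewrite lift_eqF.
have f_inj : injective f.
  by move=> a b /(congr1 (lift (s ord0))); rewrite !liftf => /perm_inj/lift_inj.
exists (perm f_inj); apply/permP => x.
case: (unliftP ord0 x) => [k -> | ->]; last by rewrite lift_perm_id.
by rewrite lift_perm_lift permE liftf.
Qed.

Lemma sum_ltn_ord n j : j <= n -> \sum_(i < n) (i < j) = j.
Proof.
elim: n j => [|n IHn] j le_jn; first by rewrite big_ord0; case: j le_jn.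
rewrite big_ord_recr /=; have [lt_nj | le_jn'] := ltnP n j; last by rewrite IHn ?addn0.
have -> : j = n.+1 by apply/eqP; rewrite eqn_leq le_jn lt_nj.
rewrite addn1 -[in RHS](IHn n (leqnn n)); congr _.+1.
by apply: eq_bigr => i _; rewrite ltn_ord ltnS ltnW.
Qed.

Lemma lift_ltn2 n (h : 'I_n.+1) (a b : 'I_n) : (lift h a < lift h b) = (a < b).
Proof. by rewrite /= ltn_neqAle leq_bump2 (can_eq (@bumpK h)) -ltn_neqAle. Qed.

Lemma lift_ltn_self n (h : 'I_n.+1) (a : 'I_n) : (lift h a < h) = (a < h).
Proof. by rewrite /= /bump; case: leqP => le_ha; rewrite ?add1n ?add0n //; lia. Qed.

Lemma inversions_lift_perm0 n (j : 'I_n.+1) (s : 'S_n) :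
  inversions (lift_perm ord0 j s) = j + inversions s.
Proof.
rewrite /inversions big_ord_recl big_ord_recl /= add0n; congr (_ + _).
  transitivity (\sum_(i < n) (s i < j)).
    by apply: eq_bigr => k _; rewrite lift_perm_lift lift_perm_id lift_ltn_self.
  rewrite (reindex_inj (@perm_inj _ s^-1)) /=.
  under eq_bigr => k _ do rewrite permKV.
  by rewrite sum_ltn_ord // -ltnS.
apply: eq_bigr => i _; rewrite big_ord_recl /= add0n.
by apply: eq_bigr => k _; rewrite !lift_perm_lift lift_ltn2.
Qed.

Lemma odd_perm_inversions n (s : 'S_n) : odd_perm s = odd (inversions s).
Proof.
elim: n s => [|n IHn] s.
  by rewrite (_ : s = 1%g) ?odd_perm1 /inversions ?big_ord0 //; apply/permP => -[].
have [s' ->] := lift_perm0P s.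
by rewrite odd_lift_perm inversions_lift_perm0 oddD IHn.
Qed.

Lemma count_sum (T : Type) (P : pred T) (s : seq T) : count P s = \sum_(x <- s) P x.
Proof. by elim: s => [|x s IHs]; rewrite ?big_nil ?big_cons //= IHs. Qed.

Lemma count_eq1_eq (T : eqType) (P : pred T) (s : seq T) x y :
  count P s = 1 -> x \in s -> y \in s -> P x -> P y -> x = y.
Proof.
rewrite -size_filter => s1 sx sy Px Py.
have: x \in filter P s by rewrite mem_filter Px sx.
have: y \in filter P s by rewrite mem_filter Py sy.
by case: (filter P s) s1 => [|z [|]] //= _; rewrite !inE => /eqP-> /eqP->.
Qed.

Lemma count_predU_disjoint (T : Type) (P1 P2 : pred T) (s : seq T) :
  (forall x, ~~ (P1 x && P2 x)) -> count (predU P1 P2) s = count P1 s + count P2 s.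
Proof.
move=> disj; rewrite -count_predUI.
rewrite [count (predI _ _) _](eq_count (a2 := pred0)) ?count_pred0 ?addn0 //.
by move=> x /=; apply/negbTE/disj.
Qed.

Lemma count_andr (T : Type) (P : pred T) (b : bool) (s : seq T) :
  count (fun x => P x && b) s = b * count P s.
Proof.
by case: b; rewrite ?mul1n ?mul0n; under eq_count do rewrite ?andbT ?andbF; rewrite ?count_pred0.
Qed.

Lemma eq_odd_sum (T : eqType) (s : seq T) (f g : T -> nat) :
  {in s, odd \o f =1 odd \o g} -> odd (\sum_(x <- s) f x) = odd (\sum_(x <- s) g x).
Proof.
elim: s => [|x s IHs] fg; rewrite ?big_nil // !big_cons !oddD.
have /= -> := fg x (mem_head x s); rewrite IHs // => y sy.
by apply: fg; rewrite inE sy orbT.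
Qed.

Lemma odd_count_odd (T : Type) (f : T -> nat) (s : seq T) :
  odd (count (odd \o f) s) = odd (\sum_(x <- s) f x).
Proof.
elim: s => [|x s IHs]; first by rewrite big_nil.
by rewrite big_cons /= !oddD IHs; case: (odd (f x)).
Qed.

Lemma zip_map2 (S T U V : Type) (f : S -> U) (g : T -> V) s t :
  zip (map f s) (map g t) = [seq (f p.1, g p.2) | p <- zip s t].
Proof. by elim: s t => [|x s IHs] [|y t] //=; rewrite IHs. Qed.

Lemma sum_count_mem (T : eqType) (s t : seq T) (f : T -> nat) :
  uniq t -> {subset s <= t} -> \sum_(x <- s) f x = \sum_(y <- t) count_mem y s * f y.
Proof.
move=> t_uniq; elim: s => [|x s IHs] st.
  by rewrite big_nil big1 // => y _; rewrite mul0n.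
rewrite big_cons IHs => [|y sy]; last by apply: st; rewrite inE sy orbT.
under [RHS]eq_bigr do rewrite /= mulnDl.
rewrite big_split /=; congr (_ + _).
rewrite (bigD1_seq x) ?st ?mem_head //= eqxx mul1n big1 ?addn0 // => y.
by rewrite eq_sym => /negbTE->.
Qed.

Lemma find_iota0 (p : pred nat) n c :
  c < n -> p c -> (forall j, j < c -> ~~ p j) -> find p (iota 0 n) = c.
Proof.
move=> lt_cn pc before_c.
have has_p : has p (iota 0 n) by apply/hasP; exists c; rewrite // mem_iota.
have lt_fn : find p (iota 0 n) < n by rewrite -[X in _ < X](size_iota 0 n) -has_find.
have := nth_find 0 has_p; rewrite nth_iota ?add0n // => pf.
case: (ltngtP (find p (iota 0 n)) c) => // [/before_c | lt_cf]; first by rewrite pf.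
by have := before_find 0 lt_cf; rewrite nth_iota ?add0n ?(ltn_trans lt_cf) // pc.
Qed.

Lemma mon_ext (u v : mon) : ex u = ex v -> ey u = ey v -> ez u = ez v -> u = v.
Proof. by case: u => [[a b] c]; case: v => [[a' b'] c']; rewrite /ex /ey /ez /= => -> -> ->. Qed.

Lemma mon_ext_deg (u v : mon) : deg u = deg v -> ex u = ex v -> ez u = ez v -> u = v.
Proof. by rewrite /deg => ? ? ?; apply: mon_ext => //; lia. Qed.

Lemma mem_monos n u : (u \in monos n) = (deg u == n).
Proof.
rewrite /deg; apply/allpairsPdep/eqP => [[a [b []]] | deg_u].
  by rewrite !mem_iota => ? ? ->; rewrite /ex /ey /ez /=; lia.
exists (ex u), (ey u); rewrite !mem_iota; split; try lia.
by apply: mon_ext; rewrite /ex /ey /ez /= in deg_u *; lia.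
Qed.

Lemma uniq_monos n : uniq (monos n).
Proof.
apply: allpairs_uniq_dep => [|a _|[a b] [a' b'] _ _ [-> ->]] //; exact: iota_uniq.
Qed.

Lemma ex_mulx m : ex (mulx m) = (ex m).+1. Proof. exact: addn1. Qed.
Lemma ez_mulx m : ez (mulx m) = ez m. Proof. by []. Qed.
Lemma ex_muly m : ex (muly m) = ex m. Proof. by []. Qed.
Lemma ez_muly m : ez (muly m) = ez m. Proof. by []. Qed.
Lemma ex_mulz m : ex (mulz m) = ex m. Proof. by []. Qed.
Lemma ez_mulz m : ez (mulz m) = (ez m).+1. Proof. exact: addn1. Qed.
Lemma ez_divz m : ez (divz m) = (ez m).-1. Proof. exact: subn1. Qed.

Lemma deg_mulz m : deg (mulz m) = (deg m).+1.
Proof. by rewrite /deg ez_mulz addnS. Qed.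

Lemma mulzK : cancel mulz divz.
Proof. by move=> m; apply: mon_ext => //; rewrite ez_divz ez_mulz. Qed.

Lemma divzK u : 0 < ez u -> mulz (divz u) = u.
Proof. by move=> ez_gt0; apply: mon_ext => //; rewrite ez_mulz ez_divz prednK. Qed.

Lemma deg_divz u : 0 < ez u -> deg (divz u) + 1 = deg u.
Proof. by move=> ez_gt0; rewrite -{2}(divzK ez_gt0) deg_mulz addn1. Qed.

Lemma ez_le_deg u : ez u <= deg u.
Proof. exact: leq_addl. Qed.

Lemma lozengeP m u : u \in [:: mulx m; muly m; mulz m] ->
  [\/ u = mulx m, u = muly m | u = mulz m].
Proof. by rewrite !inE => /or3P[] /eqP->; [apply: Or31 | apply: Or32 | apply: Or33]. Qed.

Lemma grevlex_trans : transitive grevlex_ge.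
Proof. by move=> ? ? ?; rewrite /grevlex_ge; lia. Qed.

Lemma grevlex_total : total grevlex_ge.
Proof. by move=> ? ?; rewrite /grevlex_ge; lia. Qed.

Lemma grevlex_anti u v : deg u = deg v -> grevlex_ge u v -> grevlex_ge v u -> u = v.
Proof. by rewrite /grevlex_ge /deg => ? ? ?; apply: mon_ext; lia. Qed.

Lemma index_grevlex_sorted (s : seq mon) u v :
  sorted grevlex_ge s -> uniq s -> u \in s -> v \in s -> deg u = deg v ->
  (index u s < index v s) = (u != v) && grevlex_ge u v.
Proof.
move=> s_sorted s_uniq su sv deg_uv; apply/idP/andP => [lt_uv | [neq_uv ge_uv]].
  split; first by apply: contraTneq lt_uv => ->; rewrite ltnn.
  exact: (sorted_ltn_index grevlex_trans s_sorted u v su sv).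
rewrite ltn_neqAle leqNgt; apply/andP; split.
  by apply: contra_neq neq_uv => /(congr1 (nth u s)); rewrite !nth_index.
apply/negP => /(sorted_ltn_index grevlex_trans s_sorted v u sv su) ge_vu.
by move: neq_uv; rewrite (grevlex_anti deg_uv ge_uv ge_vu) eqxx.
Qed.

Section Region.
Variables (d : nat) (I : pred mon).
Hypothesis idealI : monomial_ideal I.

Local Notation ups := (upsT d I).
Local Notation downs := (downsT d I).
Local Notation As := (As d I).
Local Notation Es := (Es d I).
Local Notation inUp := (inUp d I).
Local Notation inDown := (inDown d I).

Lemma mem_downsT m : (m \in downs) = inDown m.
Proof. by rewrite mem_filter mem_monos andb_idr // => /andP[/eqP <- _]; rewrite addn2. Qed.

Lemma mem_upsT u : (u \in ups) = inUp u.
Proof. by rewrite mem_filter mem_monos andb_idr // => /andP[/eqP <- _]; rewrite addn1. Qed.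

Lemma uniq_downsT : uniq downs. Proof. exact/filter_uniq/uniq_monos. Qed.
Lemma uniq_upsT : uniq ups. Proof. exact/filter_uniq/uniq_monos. Qed.

Lemma inDown_divz u : inUp u -> 0 < ez u -> inDown (divz u).
Proof.
move=> /andP[/eqP deg_u notIu] ez_gt0; apply/andP; split.
  by have := deg_divz ez_gt0; lia.
by apply: contra notIu => /idealI /and3P[_ _]; rewrite divzK.
Qed.

Lemma start_ptE u : start_pt d I u = inUp u && (ez u == 0).
Proof.
rewrite /start_pt; case Tu: (inUp u) => //=.
by have [// | ez_gt0] := posnP (ez u); rewrite inDown_divz.
Qed.

Lemma mem_As a : (a \in As) = start_pt d I a.
Proof.
rewrite mem_sort mem_filter mem_monos andb_idr // start_ptE.
by case/andP => /andP[/eqP <- _] _; rewrite addn1.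
Qed.

Lemma mem_Es e : (e \in Es) = end_pt d I e.
Proof.
rewrite mem_sort mem_filter mem_monos andb_idr // => /and4P[/eqP <- _ _ _].
by rewrite addn1.
Qed.

Lemma uniq_As : uniq As. Proof. by rewrite sort_uniq; apply/filter_uniq/uniq_monos. Qed.
Lemma uniq_Es : uniq Es. Proof. by rewrite sort_uniq; apply/filter_uniq/uniq_monos. Qed.
Lemma sorted_As : sorted grevlex_ge As. Proof. exact: (sort_sorted grevlex_total). Qed.
Lemma sorted_Es : sorted grevlex_ge Es. Proof. exact: (sort_sorted grevlex_total). Qed.

(* Rows are indexed by [ex] (growing upwards), columns by [ez] (growing to
   the right). *)
Definition row_ends (m : mon) : nat :=
  count (fun e => (ex e == ex m) && (ez e <= ez m)) Es.
Definition col_ends_below (u : mon) : nat :=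
  count (fun e => (ez e == ez u) && (ex e < ex u)) Es.
Definition ends_below_left (u : mon) : nat :=
  count (fun e => (ex e < ex u) && (ez e <= ez u)) Es.

Definition ray_crossings (m u : mon) : nat :=
  ((u == muly m) || (u == mulz m)) * row_ends m.

Definition crossings (pi : mon -> mon) : nat :=
  \sum_(m <- downs) ray_crossings m (pi m).

Definition crossing_defect : bool :=
  odd (\sum_(u <- ups) col_ends_below u) (+)
  odd (\sum_(m <- downs) ends_below_left (mulx m) + \sum_(u <- ups) ends_below_left u).

Lemma ends_below_left_mulx m :
  ends_below_left (mulx m) = ends_below_left (muly m) + row_ends m.
Proof.
rewrite -count_predU_disjoint => [|e]; last by rewrite /= ?ex_muly; lia.
by apply: eq_count => e /=; rewrite ?ex_mulx ?ex_muly ?ez_muly; lia.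
Qed.

Lemma ends_below_left_mulz m :
  ends_below_left (mulz m) = ends_below_left (muly m) + col_ends_below (mulz m).
Proof.
rewrite -count_predU_disjoint => [|e]; last by rewrite /= ?ez_mulz ?ez_muly; lia.
by apply: eq_count => e /=; rewrite ?ez_mulz ?ex_mulz ?ex_muly ?ez_muly; lia.
Qed.

Lemma lozenge_parity m u : u \in [:: mulx m; muly m; mulz m] ->
  odd (ray_crossings m u + (u == mulz m) * col_ends_below (mulz m)) =
  odd (ends_below_left (mulx m) + ends_below_left u).
Proof.
have xy : (mulx m == muly m) = false by apply/eqP => /(congr1 ex); rewrite ex_mulx ex_muly; lia.
have xz : (mulx m == mulz m) = false by apply/eqP => /(congr1 ex); rewrite ex_mulx ex_mulz; lia.
have yz : (muly m == mulz m) = false by apply/eqP => /(congr1 ez); rewrite ez_mulz ez_muly; lia.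
case/lozengeP => ->; rewrite /ray_crossings ?eqxx ?xy ?xz ?yz ?orbT /= ?mul1n ?addn0.
- by rewrite addnn odd_double.
- by rewrite ends_below_left_mulx addnAC addnn oddD odd_double.
- by rewrite ends_below_left_mulx ends_below_left_mulz addnACA addnn !oddD odd_double.
Qed.

Lemma col_ends_below0 u : ez u = 0 -> col_ends_below u = 0.
Proof.
move=> ez_u0; apply/eqP; rewrite -leqn0 leqNgt -has_count; apply/hasPn => e.
by rewrite mem_Es ez_u0 => /and4P[_ _ /gtn_eqF->].
Qed.

Lemma count_ray_crosses (l : mon * mon) :
  count (ray_crosses^~ l) Es = ray_crossings l.1 l.2.
Proof.
rewrite /ray_crossings /row_ends -count_andr.
by apply: eq_count => e; rewrite /ray_crosses eq_sym andbA.
Qed.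

Lemma odd_Ecount L : odd (Ecount d I L) = odd (\sum_(l <- curve_links L) ray_crossings l.1 l.2).
Proof.
rewrite /Ecount /inside (odd_count_odd (fun e => count (ray_crosses e) _)).
under eq_bigr do rewrite count_sum.
by rewrite exchange_big; under eq_bigr do rewrite -count_sum count_ray_crosses.
Qed.

Section LatticePaths.
Variable pi : mon -> mon.
Hypothesis tiling_pi : tiling d I pi.

Local Notation pinv := (pinv d I pi).

Lemma tiling_lozenge m : inDown m ->
  inUp (pi m) /\ pi m \in [:: mulx m; muly m; mulz m].
Proof. by case: tiling_pi => loz _ /loz /and3P[]. Qed.

Lemma pinvK u : inUp u -> inDown (pinv u) /\ pi (pinv u) = u.
Proof.
case: tiling_pi => _ /[apply] count1.
have has_u : has (fun m => pi m == u) downs by rewrite has_count count1.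
split; last exact/eqP/(nth_find u has_u).
by rewrite -mem_downsT /pinv mem_nth // -has_find.
Qed.

Lemma tiling_inj m1 m2 : inDown m1 -> inDown m2 -> pi m1 = pi m2 -> m1 = m2.
Proof.
move=> Dm1 Dm2 pi12; case: tiling_pi => _ /(_ _ (proj1 (tiling_lozenge Dm1))) count1.
by apply: (count_eq1_eq count1); rewrite ?mem_downsT //= pi12.
Qed.

Lemma piK m : inDown m -> pinv (pi m) = m.
Proof.
move=> Dm; have [Dpm ppm] := pinvK (proj1 (tiling_lozenge Dm)).
exact: tiling_inj.
Qed.

Lemma sum_tiling (k : mon -> nat) : \sum_(m <- downs) k (pi m) = \sum_(u <- ups) k u.
Proof.
transitivity (\sum_(m <- downs) \sum_(u <- ups) (pi m == u) * k u).
  rewrite !big_seq; apply: eq_bigr => m; rewrite mem_downsT => Dm.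
  have [Upm _] := tiling_lozenge Dm.
  rewrite (bigD1_seq (pi m)) ?mem_upsT ?uniq_upsT //= eqxx mul1n big1 ?addn0 // => u.
  by rewrite eq_sym => /negbTE->.
rewrite exchange_big !big_seq; apply: eq_bigr => u; rewrite mem_upsT => Uu.
by rewrite -big_distrl -count_sum (proj2 tiling_pi u Uu) /= mul1n.
Qed.

(* A path enters the lozenge of the upward triangle [u] through the left edge
   of [u] and leaves it through the right edge of the downward triangle
   [pinv u], which is the left edge of [mulz (pinv u)]. *)
Definition next_pt (u : mon) : mon := mulz (pinv u).

(* A path runs through the edge [u] iff [u] is a start point, or the
   downward triangle [divz u] on its left is in [T] and its lozenge does not
   contain [u]. *)
Definition on_path (u : mon) : bool :=
  (deg u + 1 == d) &&
  (if ez u == 0 then inUp u else inDown (divz u) && (pi (divz u) != u)).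

Lemma on_path_deg u : on_path u -> deg u + 1 = d.
Proof. by case/andP => /eqP. Qed.

Lemma start_on_path a : start_pt d I a -> on_path a /\ ez a = 0.
Proof.
rewrite start_ptE => /andP[Ua /eqP ez_a0]; split=> //.
by rewrite /on_path ez_a0 eqxx Ua andbT; case/andP: Ua.
Qed.

Lemma end_ptE u : end_pt d I u = on_path u && ~~ inUp u.
Proof.
apply/and4P/andP => [[deg_u notUu ez_gt0 Ddu] | [/andP[deg_u]]].
  rewrite /on_path deg_u gtn_eqF // Ddu; split=> //.
  by apply: contraNneq notUu => <-; case: (tiling_lozenge Ddu).
by have [_ -> | _ /andP[Ddu _] ->] := posnP (ez u); rewrite ?deg_u ?Ddu.
Qed.

Lemma next_on_path u : on_path u -> inUp u ->
  [/\ on_path (next_pt u), ez (next_pt u) = (ez u).+1 &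
      ex (next_pt u) = ex u \/ (ex (next_pt u)).+1 = ex u].
Proof.
move=> Pu Uu; have [Dm pim] := pinvK Uu; rewrite /next_pt.
move: Dm pim; set m := pinv u => Dm pim.
have [_] := tiling_lozenge Dm; rewrite pim => /lozengeP loz_mu.
have u_neq_zm : u != mulz m.
  apply/eqP => u_zm; case/andP: Pu => _; rewrite {1}u_zm ez_mulz /=.
  by case/andP => _ /eqP[]; rewrite {1}u_zm mulzK pim.
have P_zm : on_path (mulz m).
  rewrite /on_path ez_mulz /= mulzK Dm pim u_neq_zm andbT.
  by case/andP: Dm => /eqP deg_m _; rewrite deg_mulz -deg_m addn1 addn2 eqxx.
rewrite ez_mulz ex_mulz.
by case: loz_mu u_neq_zm => ->; rewrite ?eqxx // ?ex_mulx ?ez_mulx ?ez_muly; split; auto.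
Qed.

Lemma next_pt_inj u1 u2 : inUp u1 -> inUp u2 -> next_pt u1 = next_pt u2 -> u1 = u2.
Proof.
move=> U1 U2 /(congr1 divz); rewrite !mulzK => /(congr1 pi).
by rewrite (proj2 (pinvK U1)) (proj2 (pinvK U2)).
Qed.

Lemma prev_on_path v : on_path v -> 0 < ez v ->
  [/\ on_path (pi (divz v)), inUp (pi (divz v)), next_pt (pi (divz v)) = v &
      (ez (pi (divz v))).+1 = ez v].
Proof.
move=> /andP[_]; have [// | ez_gt0 /andP[Dm pim_v] _] := posnP (ez v).
set m := divz v in Dm pim_v *.
have [Upm /lozengeP loz_m] := tiling_lozenge Dm.
have v_zm : v = mulz m by rewrite divzK.
have ez_pim : ez (pi m) = ez m.
  by case: loz_m pim_v => ->; rewrite -?v_zm ?eqxx.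
split; rewrite ?ez_pim ?v_zm ?ez_mulz /next_pt ?piK //.
rewrite /on_path; case/andP: (Upm) => -> _ /=.
have [// | ez_pim_gt0] := posnP (ez (pi m)); rewrite inDown_divz //=.
have Ddpm := inDown_divz Upm ez_pim_gt0.
apply: contraTneq ez_pim_gt0 => /(tiling_inj Ddpm Dm)/(congr1 ez).
by rewrite ez_divz ez_pim; lia.
Qed.

Lemma iter_next_on_path k u : on_path u -> (forall j, j < k -> inUp (iter j next_pt u)) ->
  on_path (iter k next_pt u) /\ ez (iter k next_pt u) = ez u + k.
Proof.
move=> Pu; elim: k => [|k IHk] Uj; first by rewrite addn0.
have [Pk ez_k] := IHk (fun j lt_jk => Uj j (ltnW lt_jk)).
have [Pk1 ez_k1 _] := next_on_path Pk (Uj k (ltnSn k)).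
by rewrite iterS ez_k1 ez_k addnS.
Qed.

Definition path_len (u : mon) : nat :=
  find (fun k => ~~ inUp (iter k next_pt u)) (iota 0 d).

Lemma path_lenP u : on_path u ->
  [/\ path_len u < d, ~~ inUp (iter (path_len u) next_pt u) &
      forall j, j < path_len u -> inUp (iter j next_pt u)].
Proof.
move=> Pu; set p := fun k => ~~ inUp (iter k next_pt u).
have has_p : has p (iota 0 d).
  apply/negPn/negP => /hasPn not_p.
  have Uj j : j < d -> inUp (iter j next_pt u).
    by move=> lt_jd; apply/negbNE/not_p; rewrite mem_iota.
  have [/on_path_deg deg_d ez_d] := iter_next_on_path Pu Uj.
  by have := ez_le_deg (iter d next_pt u); rewrite ez_d; lia.
have lt_len : path_len u < d by rewrite /path_len -[X in _ < X](size_iota 0 d) -has_find.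
split=> // [|j lt_j]; first by have := nth_find 0 has_p; rewrite nth_iota.
by have := before_find 0 lt_j; rewrite nth_iota ?add0n ?(ltn_trans lt_j) // => /negbFE.
Qed.

Lemma path_len_eq u c : c < d -> (forall j, j < c -> inUp (iter j next_pt u)) ->
  ~~ inUp (iter c next_pt u) -> path_len u = c.
Proof. by move=> lt_cd Uj notUc; apply: find_iota0 => // j /Uj ->. Qed.

Definition endpoint (u : mon) : mon := iter (path_len u) next_pt u.

Lemma path_end_iter k u fuel : k <= fuel ->
  (forall j, j < k -> inUp (iter j next_pt u)) -> ~~ inUp (iter k next_pt u) ->
  path_end d I pi fuel u = iter k next_pt u.
Proof.
elim: k u fuel => [|k IHk] u [|fuel] le_k Uj notUk //; first by rewrite /= (negbTE notUk).
rewrite [path_end _ _ _ _ _]/= (Uj 0 isT) -/(next_pt u) iterSr.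
by apply: IHk => // [j lt_jk|]; rewrite -iterSr //; apply: Uj.
Qed.

Lemma path_endE u : on_path u -> path_end d I pi d u = endpoint u.
Proof. by case/path_lenP => lt_len notU Uj; apply: path_end_iter => //; apply: ltnW. Qed.

Lemma endpointP u : on_path u -> end_pt d I (endpoint u) /\ ez (endpoint u) = ez u + path_len u.
Proof.
move=> Pu; have [_ notU Uj] := path_lenP Pu.
have [P_end ez_end] := iter_next_on_path Pu Uj.
by rewrite end_ptE /endpoint P_end.
Qed.

Lemma path_len_gt0 a : start_pt d I a -> 0 < path_len a.
Proof.
move=> Sa; have [Pa _] := start_on_path Sa; have [_ notU _] := path_lenP Pa.
by rewrite lt0n; apply: contraNneq notU => ->; move: Sa; rewrite start_ptE => /andP[].
Qed.

Lemma ez_endpoint a : start_pt d I a -> ez (endpoint a) = path_len a.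
Proof. by case/start_on_path => Pa ez_a0; have [_ ->] := endpointP Pa; rewrite ez_a0. Qed.

Lemma iter_next_ex_lt k u1 u2 : on_path u1 -> on_path u2 -> ez u1 = ez u2 -> ex u2 < ex u1 ->
  (forall j, j < k -> inUp (iter j next_pt u1) && inUp (iter j next_pt u2)) ->
  ex (iter k next_pt u2) < ex (iter k next_pt u1).
Proof.
move=> P1 P2 ez12 ex21; elim: k => [|k IHk] //= U12.
have {}U12 j : j <= k -> inUp (iter j next_pt u1) && inUp (iter j next_pt u2) by apply: U12.
have [Pk1 ez_k1] := iter_next_on_path P1 (fun j lt_jk => proj1 (andP (U12 j (ltnW lt_jk)))).
have [Pk2 ez_k2] := iter_next_on_path P2 (fun j lt_jk => proj2 (andP (U12 j (ltnW lt_jk)))).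
have /andP[Uk1 Uk2] := U12 k (leqnn k).
have [Pn1 ez_n1 ex_n1] := next_on_path Pk1 Uk1; have [Pn2 ez_n2 ex_n2] := next_on_path Pk2 Uk2.
have lt_k := IHk (fun j lt_jk => U12 j (ltnW lt_jk)).
rewrite ltnNge leq_eqVlt negb_or -ltnNge; apply/andP; split; last by case: ex_n1; case: ex_n2; lia.
apply: contraTneq lt_k => ex_n12; suff -> : iter k next_pt u2 = iter k next_pt u1 by rewrite ltnn.
apply: next_pt_inj => //; apply: mon_ext_deg => //; last by rewrite ez_n1 ez_n2 ez_k1 ez_k2 ez12.
by have := on_path_deg Pn1; have := on_path_deg Pn2; lia.
Qed.

Lemma iter_next_inj k u1 u2 :
  (forall j, j < k -> inUp (iter j next_pt u1) && inUp (iter j next_pt u2)) ->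
  iter k next_pt u1 = iter k next_pt u2 -> u1 = u2.
Proof.
elim: k u1 u2 => [|k IHk] u1 u2 //= U12 iter12.
have /andP[U1 U2] := U12 0 isT; apply: next_pt_inj => //; apply: IHk; last by rewrite -!iterSr.
by move=> j lt_jk; rewrite -!iterSr; apply: U12.
Qed.

Lemma iter_next_from_start c v : on_path v -> ez v = c ->
  exists a, [/\ start_pt d I a, iter c next_pt a = v &
                forall j, j < c -> inUp (iter j next_pt a)].
Proof.
elim: c v => [|c IHc] v Pv ez_v.
  by exists v; split=> //; rewrite start_ptE -ez_v eqxx andbT; case/andP: Pv => _; rewrite ez_v.
have ez_gt0 : 0 < ez v by rewrite ez_v.
have [Pw Uw next_w ez_w] := prev_on_path Pv ez_gt0.
have [a [Sa iter_a Uj]] := IHc _ Pw (succn_inj (etrans ez_w ez_v)).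
exists a; split=> // [|j]; first by rewrite iterS iter_a.
by rewrite ltnS leq_eqVlt => /predU1P[-> | /Uj]; rewrite ?iter_a.
Qed.

Lemma endpoint_inj : {in start_pt d I &, injective endpoint}.
Proof.
move=> a1 a2 S1 S2 end12; have len12 : path_len a1 = path_len a2 by rewrite -!ez_endpoint // end12.
have [P1 _] := start_on_path S1; have [P2 _] := start_on_path S2.
have [_ _ U1] := path_lenP P1; have [_ _ U2] := path_lenP P2.
apply: (@iter_next_inj (path_len a1)); last by rewrite [in RHS]len12.
by move=> j lt_j; rewrite U1 // U2 // -len12.
Qed.

Lemma endpoint_onto e : end_pt d I e -> exists2 a, start_pt d I a & endpoint a = e.
Proof.
rewrite end_ptE => /andP[Pe notUe].
have [a [Sa iter_a Uj]] := iter_next_from_start Pe (erefl (ez e)).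
exists a => //; rewrite /endpoint (@path_len_eq a (ez e)) ?iter_a //.
by have := ez_le_deg e; have := on_path_deg Pe; lia.
Qed.

Lemma perm_endpoints : perm_eq (map endpoint As) Es.
Proof.
apply: uniq_perm; rewrite ?uniq_Es ?map_inj_in_uniq ?uniq_As //.
  by move=> a1 a2; rewrite !mem_As; apply: endpoint_inj.
move=> e; rewrite mem_Es; apply/mapP/idP => [[a] | /endpoint_onto[a Sa <-]].
  by rewrite mem_As => /start_on_path[Pa _] ->; case: (endpointP Pa).
by exists a; rewrite ?mem_As.
Qed.

Lemma size_As_Es : size As = size Es.
Proof. by rewrite -(perm_size perm_endpoints) size_map. Qed.

Definition path_inversions : nat :=
  \sum_(a <- As) \sum_(a' <- As)
     ((index a As < index a' As) && (index (endpoint a') Es < index (endpoint a) Es)).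

Lemma start_pt_nth i : i < size As -> start_pt d I (nth (0, 0, 0) As i).
Proof. by move=> lt_i; rewrite -mem_As mem_nth. Qed.

Lemma index_path_end_lt (i : 'I_(size As)) :
  index (path_end d I pi d (nth (0, 0, 0) As i)) Es < size As.
Proof.
have [Pi _] := start_on_path (start_pt_nth (ltn_ord i)).
apply: (leq_trans _ (eq_leq (esym size_As_Es))).
by rewrite path_endE // index_mem mem_Es; case: (endpointP Pi).
Qed.

Lemma lambda_perm : exists s : {perm 'I_(size As)},
  forall i, val (s i) = index (path_end d I pi d (nth (0, 0, 0) As i)) Es.
Proof.
pose f i := Ordinal (index_path_end_lt i).
suff f_inj : injective f by exists (perm f_inj) => i; rewrite permE.
move=> i j /(congr1 val) /=.
have [Pi _] := start_on_path (start_pt_nth (ltn_ord i)).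
have [Pj _] := start_on_path (start_pt_nth (ltn_ord j)).
have [Ei _] := endpointP Pi; have [Ej _] := endpointP Pj.
rewrite !path_endE // => /(congr1 (nth (0, 0, 0) Es)); rewrite !nth_index ?mem_Es //.
move/endpoint_inj => /(_ (start_pt_nth (ltn_ord i)) (start_pt_nth (ltn_ord j))) /eqP.
by rewrite nth_uniq ?uniq_As // => /eqP/val_inj.
Qed.

Lemma lp_odd_path_inversions : lp_odd d I pi = odd path_inversions.
Proof.
rewrite /lp_odd; case: pickP => [s /forallP s_lambda | no_lambda]; last first.
  have [s s_lambda] := lambda_perm.
  by have /forallP[] := negbT (no_lambda s) => i; rewrite s_lambda.
rewrite odd_perm_inversions /inversions /path_inversions; congr odd.
rewrite (big_nth (0, 0, 0)) big_mkord; apply: eq_bigr => i _.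
rewrite (big_nth (0, 0, 0)) big_mkord; apply: eq_bigr => j _.
have [Pi _] := start_on_path (start_pt_nth (ltn_ord i)).
have [Pj _] := start_on_path (start_pt_nth (ltn_ord j)).
by rewrite !index_uniq ?uniq_As // -!path_endE // -(eqP (s_lambda i)) -(eqP (s_lambda j)).
Qed.

Lemma start_pt_deg a : start_pt d I a -> deg a + 1 = d.
Proof. by case/start_on_path => /on_path_deg. Qed.

Lemma index_As a a' : start_pt d I a -> start_pt d I a' ->
  (index a As < index a' As) = (ex a' < ex a).
Proof.
move=> Sa Sa'; have [_ ez_a] := start_on_path Sa; have [_ ez_a'] := start_on_path Sa'.
have deg_aa' : deg a = deg a' by have := start_pt_deg Sa; have := start_pt_deg Sa'; lia.
rewrite index_grevlex_sorted ?sorted_As ?uniq_As ?mem_As // /grevlex_ge ez_a ez_a' ltnn eqxx /=.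
have -> : (a != a') = (ex a != ex a').
  congr (~~ _); apply/eqP/eqP => [-> // | ex_aa'].
  by apply: mon_ext_deg; rewrite ?ez_a ?ez_a'.
by move: deg_aa'; rewrite /deg ez_a ez_a'; lia.
Qed.

Lemma index_Es_endpoint a a' : start_pt d I a -> start_pt d I a' -> ex a' < ex a ->
  (index (endpoint a') Es < index (endpoint a) Es) = (path_len a' < path_len a).
Proof.
move=> Sa Sa' lt_a'a; have [Pa ez_a] := start_on_path Sa; have [Pa' ez_a'] := start_on_path Sa'.
have [Ea _] := endpointP Pa; have [Ea' _] := endpointP Pa'.
have deg_ee' : deg (endpoint a') = deg (endpoint a).
  by move: Ea Ea' => /and4P[/eqP deg_e _ _ _] /and4P[/eqP deg_e' _ _ _]; lia.
rewrite index_grevlex_sorted ?sorted_Es ?uniq_Es ?mem_Es // /grevlex_ge !ez_endpoint //.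
case: (ltngtP (path_len a') (path_len a)) => [lt_len | lt_len | len_eq] /=.
- by rewrite andbT; apply: contraTneq lt_len => end_eq; rewrite -!ez_endpoint // end_eq ltnn.
- by rewrite andbF.
have [_ _ Ua] := path_lenP Pa; have [_ _ Ua'] := path_lenP Pa'.
have lt_ee' : ex (endpoint a') < ex (endpoint a).
  rewrite /endpoint len_eq; apply: iter_next_ex_lt; rewrite ?ez_a ?ez_a' //.
  by move=> j lt_j; rewrite Ua // Ua' // len_eq.
have := ez_endpoint Sa; have := ez_endpoint Sa'.
by move: deg_ee' lt_ee'; rewrite /deg; lia.
Qed.

Lemma path_inversionsE : path_inversions =
  \sum_(a' <- As) count (fun a => (ex a' < ex a) && (path_len a' < path_len a)) As.
Proof.
rewrite /path_inversions exchange_big !big_seq; apply: eq_bigr => a' As_a'.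
rewrite count_sum !big_seq; apply: eq_bigr => a As_a.
move: As_a As_a'; rewrite !mem_As => Sa Sa'; rewrite index_As //.
by case: (ltnP (ex a') (ex a)) => //= lt_a'a; rewrite index_Es_endpoint.
Qed.

Definition path_pt_above (q u : mon) : bool :=
  [&& ez u == ez q, ex q < ex u & pi (divz u) != u].

Lemma iter_path_pt_above a a' : start_pt d I a -> start_pt d I a' ->
  ex a' < ex a -> path_len a' < path_len a ->
  inUp (iter (path_len a') next_pt a) &&
  path_pt_above (endpoint a') (iter (path_len a') next_pt a).
Proof.
move=> Sa Sa' lt_a'a lt_len; set c := path_len a' in lt_len *.
have [Pa ez_a] := start_on_path Sa; have [Pa' ez_a'] := start_on_path Sa'.
have [_ _ Ua] := path_lenP Pa; have [_ _ Ua'] := path_lenP Pa'.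
have Uac j : j < c -> inUp (iter j next_pt a) by move=> lt_jc; apply/Ua/(ltn_trans lt_jc).
have [Pc ez_c] := iter_next_on_path Pa Uac.
rewrite Ua // /path_pt_above ez_c ez_endpoint // ez_a eqxx /=.
apply/andP; split.
  rewrite /endpoint -/c; apply: (iter_next_ex_lt Pa Pa' (etrans ez_a (esym ez_a')) lt_a'a).
  by move=> j lt_jc; rewrite Uac // Ua'.
by move: Pc; rewrite /on_path ez_c ez_a add0n (gtn_eqF (path_len_gt0 Sa')) => /andP[_ /andP[]].
Qed.

Lemma path_pt_aboveP a' u : start_pt d I a' -> inUp u -> path_pt_above (endpoint a') u ->
  exists2 a, [&& start_pt d I a, ex a' < ex a & path_len a' < path_len a] &
             iter (path_len a') next_pt a = u.
Proof.
move=> Sa' Uu /and3P[/eqP ez_u lt_e'u piu]; rewrite ez_endpoint // in ez_u.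
have [Pa' ez_a'] := start_on_path Sa'; have [_ notUa' Ua'] := path_lenP Pa'.
have Pu : on_path u.
  have ez_gt0 : 0 < ez u by rewrite ez_u path_len_gt0.
  by rewrite /on_path (gtn_eqF ez_gt0) piu inDown_divz //; case/andP: Uu => ->.
have [a [Sa iter_a Ua]] := iter_next_from_start Pu ez_u.
have [Pa ez_a] := start_on_path Sa; have [_ notUa _] := path_lenP Pa.
exists a => //; apply/and3P; split=> //.
  case: (ltngtP (ex a') (ex a)) => // [lt_aa' | ex_aa'].
    have := @iter_next_ex_lt (path_len a') a' a Pa' Pa (etrans ez_a' (esym ez_a)) lt_aa'.
    rewrite iter_a -/(endpoint a') => /(_ _)/(ltn_trans lt_e'u); rewrite ltnn.
    by apply => j lt_jc; rewrite Ua' ?Ua.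
  have a'_a : a' = a.
    apply: mon_ext_deg; rewrite ?ez_a ?ez_a' //.
    by have := start_pt_deg Sa; have := start_pt_deg Sa'; lia.
  by move: lt_e'u; rewrite -a'_a in iter_a; rewrite /endpoint iter_a ltnn.
case: (ltnP (path_len a') (path_len a)) => // le_len; move: notUa.
by rewrite leq_eqVlt in le_len; case/predU1P: le_len => [->|/Ua ->]; rewrite ?iter_a ?Uu.
Qed.

Lemma count_longer_paths a' : start_pt d I a' ->
  count (fun a => (ex a' < ex a) && (path_len a' < path_len a)) As =
  count (path_pt_above (endpoint a')) ups.
Proof.
move=> Sa'; rewrite -!size_filter; set c := path_len a'.
suff /perm_size <- : perm_eq
    (map (iter c next_pt) [seq a <- As | (ex a' < ex a) && (c < path_len a)])
                             [seq u <- ups | path_pt_above (endpoint a') u] by rewrite size_map.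
have uniq_above : uniq [seq u <- ups | path_pt_above (endpoint a') u].
  exact/filter_uniq/uniq_upsT.
apply: uniq_perm _ uniq_above _ => [|u].
  rewrite map_inj_in_uniq ?filter_uniq ?uniq_As // => a1 a2.
  rewrite !mem_filter !mem_As => /andP[/andP[_ lt1] S1] /andP[/andP[_ lt2] S2].
  apply: iter_next_inj => j lt_jc.
  have [P1 _] := start_on_path S1; have [P2 _] := start_on_path S2.
  have [_ _ U1] := path_lenP P1; have [_ _ U2] := path_lenP P2.
  by rewrite U1 ?U2 ?(ltn_trans lt_jc).
rewrite mem_filter mem_upsT; apply/mapP/andP => [[a] | [above_u Uu]].
  rewrite mem_filter mem_As => /andP[/andP[lt_a'a lt_len] Sa] ->.
  by apply/andP; rewrite andbC; apply: iter_path_pt_above.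
have [a /and3P[Sa lt_a'a lt_len] <-] := path_pt_aboveP Sa' Uu above_u.
by exists a; rewrite // mem_filter mem_As Sa lt_a'a lt_len.
Qed.

Definition column_passages : nat := \sum_(q <- Es) count (path_pt_above q) ups.

Lemma path_inversions_passages : path_inversions = column_passages.
Proof.
rewrite path_inversionsE /column_passages -(perm_big _ perm_endpoints) big_map !big_seq.
by apply: eq_bigr => a; rewrite mem_As => Sa; rewrite count_longer_paths.
Qed.

Lemma column_passagesE :
  column_passages = \sum_(u <- ups) (pi (divz u) != u) * col_ends_below u.
Proof.
rewrite /column_passages; under eq_bigr do rewrite count_sum.
rewrite exchange_big; apply: eq_bigr => u _; rewrite /col_ends_below count_sum big_distrr.
apply: eq_bigr => q _; rewrite /path_pt_above eq_sym.
by case: (ez q == ez u); case: (ex q < ex u); case: (pi (divz u) == u).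
Qed.

Lemma col_ends_below_pi m : inDown m ->
  (pi (divz (pi m)) == pi m) * col_ends_below (pi m) = (pi m == mulz m) * col_ends_below (mulz m).
Proof.
move=> Dm; have [Upm _] := tiling_lozenge Dm.
have [pim_zm | pim_zm] := eqVneq (pi m) (mulz m); first by rewrite pim_zm mulzK pim_zm eqxx.
have [/col_ends_below0-> | ez_gt0] := posnP (ez (pi m)); first by rewrite muln0.
suff -> : (pi (divz (pi m)) == pi m) = false by [].
apply: contra_neqF pim_zm => /eqP/(tiling_inj (inDown_divz Upm ez_gt0) Dm) divz_pim.
by rewrite -[in RHS]divz_pim divzK.
Qed.

Lemma crossings_parity :
  odd (crossings pi + \sum_(m <- downs) (pi m == mulz m) * col_ends_below (mulz m)) =
  odd (\sum_(m <- downs) ends_below_left (mulx m) + \sum_(u <- ups) ends_below_left u).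
Proof.
rewrite /crossings -big_split -(sum_tiling ends_below_left) -big_split.
by apply: eq_odd_sum => m; rewrite mem_downsT => /tiling_lozenge[_ /lozenge_parity].
Qed.

Lemma column_passages_crossings :
  odd column_passages (+) odd (crossings pi) = crossing_defect.
Proof.
pose Z := \sum_(m <- downs) (pi m == mulz m) * col_ends_below (mulz m).
have col_sum : column_passages + Z = \sum_(u <- ups) col_ends_below u.
  have -> : Z = \sum_(u <- ups) (pi (divz u) == u) * col_ends_below u.
    rewrite /Z -sum_tiling [LHS]big_seq [RHS]big_seq; apply: eq_bigr => m.
    by rewrite mem_downsT => /col_ends_below_pi.
  rewrite column_passagesE -big_split; apply: eq_bigr => u _.
  by case: eqP; rewrite /= ?mul1n ?mul0n ?addn0.
rewrite /crossing_defect -col_sum -crossings_parity !oddD.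
by case: (odd column_passages); case: (odd (crossings pi)); case: (odd Z).
Qed.

Lemma lp_odd_crossings : lp_odd d I pi = odd (crossings pi) (+) crossing_defect.
Proof.
rewrite lp_odd_path_inversions path_inversions_passages -column_passages_crossings.
by case: (odd column_passages); case: (odd (crossings pi)).
Qed.

End LatticePaths.

Lemma curve_links_sum (pi1 pi2 : mon -> mon) (C : seq mon) :
  all (fun p => pi2 p.1 == pi1 p.2) (zip C (rot 1 C)) ->
  \sum_(l <- curve_links (loz_of pi1 C)) ray_crossings l.1 l.2 =
  \sum_(m <- C) (ray_crossings m (pi1 m) + ray_crossings m (pi2 m)).
Proof.
move=> /allP succ_C; rewrite /curve_links /loz_of big_cat big_map -map_rot zip_map2.
rewrite -map_comp big_map big_split /=; congr (_ + _).
rewrite big_seq (eq_bigr (fun p => ray_crossings p.1 (pi2 p.1))) => [|p /succ_C /eqP-> //].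
rewrite -big_seq -(big_map fst predT (fun m => ray_crossings m (pi2 m))).
by rewrite -/(unzip1 _) unzip1_zip ?size_rot.
Qed.

(* Each lozenge common to both tilings is counted twice in
   [crossings pi1 + crossings pi2], hence does not change its parity. *)
Lemma odd_Ecount_diff_cycles (pi1 pi2 : mon -> mon) (Cs : seq (seq mon)) :
  diff_cycles d I pi1 pi2 Cs ->
  odd (\sum_(C <- Cs) Ecount d I (loz_of pi1 C)) = odd (crossings pi1) (+) odd (crossings pi2).
Proof.
case=> cycle_C count_m.
pose both_crossings m := ray_crossings m (pi1 m) + ray_crossings m (pi2 m).
rewrite (eq_odd_sum (g := fun C => \sum_(m <- C) both_crossings m)); last first.
  by move=> C /cycle_C[_ _ _ succ_C] /=; rewrite odd_Ecount (curve_links_sum succ_C).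
rewrite -big_flatten /= (sum_count_mem _ uniq_downsT); last first.
  move=> m /flattenP[C /cycle_C[_ _ D_C _]].
  by rewrite mem_downsT; apply: (allP D_C).
rewrite /crossings -oddD -big_split /=; apply: eq_odd_sum => m; rewrite mem_downsT => Dm /=.
by rewrite count_m //; case: eqP => [->|]; rewrite ?mul1n // mul0n addnn odd_double.
Qed.

End Region.

Theorem corollary4p5 (d : nat) (I : pred mon) (pi1 pi2 : mon -> mon)
    (Cs : seq (seq mon)) :
  monomial_ideal I -> nonempty_region d I -> balanced d I ->
  tiling d I pi1 -> tiling d I pi2 -> diff_cycles d I pi1 pi2 Cs ->
  (lp_odd d I pi1 = lp_odd d I pi2 <->
   ~~ odd (\sum_(C <- Cs) Ecount d I (loz_of pi1 C))).
Proof.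
move=> idealI _ _ tiling1 tiling2 diffC.
rewrite (odd_Ecount_diff_cycles diffC).
rewrite (lp_odd_crossings idealI tiling1) (lp_odd_crossings idealI tiling2).
by case: (odd (crossings d I pi1)); case: (odd (crossings d I pi2)); case: crossing_defect.
Qed.
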